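(* Let $G$ be a non-cyclic finite group of odd order $n$. Then $$\psi(G)<\frac{1}{2}\,\psi(C_n).$$
   Context: For a finite group $G$, $\psi(G)=\sum_{g\in G} o(g)$ denotes the sum of the orders of all elements of $G$. $C_n$ denotes the cyclic group of order $n$. *)

From mathcomp Require Import all_boot all_fingroup all_algebra all_solvable.
Set Implicit Arguments. Unset Strict Implicit. Unset Printing Implicit Defensive.

Definition psi (gT : finGroupType) (G : {set gT}) : nat := \sum_(x in G) #[x]%g.

(* psi(C_n), computed on the concrete cyclic group Zp n of order n (n >= 1) *)
Definition psiC (n : nat) : nat := psi (Zp n).

From mathcomp Require Import all_boot all_fingroup all_algebra all_solvable.
From mathcomp Require Import zify ring.
Set Implicit Arguments. Unset Strict Implicit. Unset Printing Implicit Defensive.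

(* The arithmetic function psi(C_n) = sum_(k < n) n / gcd(n, k) is
   supermultiplicative on coprime factors and satisfies
   (p + 1) psi(C_(p^a)) = p^(2a+1) + 1, so 3 n^2 <= (l + 1) psi(C_n) for odd n
   whose prime factors are at most l.  Induct on n = |G| and let p be the
   largest prime factor of n.  If every element has order at most n/p, then
   psi G <= 1 + (n - 1) n/p, which is less than psi(C_n)/2.  Otherwise some x
   has order > n/p; then P = <x_p> is a cyclic Sylow p-subgroup whose
   normaliser contains <x>, so the number of Sylow p-subgroups (1 mod p, at
   most p) is 1 and P is normal.  Writing #[g] <= #[gP] #[g^#[gP]] and bounding
   the second factor on C_G(P) and off it gives
   psi G <= psi P psi(C_G(P)/P) + |P|^2/p (psi(G/P) - psi(C_G(P)/P)),
   and the induction hypothesis for the two quotients (when P is central,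
   G/P is again non-cyclic) concludes. *)

(* psi (C_n), computed in Z/n where k has additive order n / gcd(n, k). *)
Definition psi_nat n := \sum_(0 <= k < n) n %/ gcdn n k.

Lemma sum_nat_blocks (F : nat -> nat) N q :
  \sum_(0 <= k < N * q) F k = \sum_(0 <= j < N) \sum_(0 <= r < q) F (j * q + r).
Proof.
rewrite big_nat_mul; apply: eq_bigr => j _.
by rewrite -{1}[j * q]add0n big_addn mulSnr addKn; apply: eq_bigr => r _; rewrite addnC.
Qed.

Lemma psi_nat0 : psi_nat 0 = 0.
Proof. by rewrite /psi_nat big_geq. Qed.

Lemma psi_nat1 : psi_nat 1 = 1.
Proof. by rewrite /psi_nat big_nat1 gcdn0 divnn. Qed.

Lemma leq_divn_gcd_mull r k x : 0 < r -> 0 < k ->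
  k %/ gcdn k x <= (r * k) %/ gcdn (r * k) x.
Proof.
move=> r_gt0 k_gt0.
have gcd_le : gcdn (r * k) x <= r * gcdn k x.
  apply: dvdn_leq; first by rewrite muln_gt0 r_gt0 gcdn_gt0 k_gt0.
  rewrite muln_gcdr dvdn_gcd dvdn_gcdl /=.
  exact: dvdn_trans (dvdn_gcdr _ _) (dvdn_mull _ _).
have gcd_gt0 : 0 < gcdn (r * k) x by rewrite gcdn_gt0 muln_gt0 r_gt0 k_gt0.
by apply: leq_trans (leq_div2l _ gcd_gt0 gcd_le); rewrite divnMl.
Qed.

Lemma leq_psi_nat_mull r k : r * psi_nat k <= psi_nat (r * k).
Proof.
have [->|r_gt0] := posnP r; first by [].
have [->|k_gt0] := posnP k; first by rewrite psi_nat0 muln0.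
rewrite /psi_nat sum_nat_blocks -[r in r * _]subn0 -sum_nat_const_nat.
apply: leq_sum => j _; apply: leq_sum => i _.
by rewrite mulnC -(gcdnMDl j) [k * r]mulnC leq_divn_gcd_mull.
Qed.

Lemma psi_nat_pfactorS p a : prime p ->
  psi_nat (p ^ a.+1) = psi_nat (p ^ a) + p ^ a * ((p - 1) * p ^ a.+1).
Proof.
move=> pr_p; have p_gt0 := prime_gt0 pr_p.
have -> : p ^ a * ((p - 1) * p ^ a.+1) = \sum_(0 <= j < p ^ a) (p - 1) * p ^ a.+1.
  by rewrite sum_nat_const_nat subn0.
rewrite {1}/psi_nat expnSr sum_nat_blocks /psi_nat -big_split /=.
apply: eq_bigr => j _.
rewrite big_ltn // addn0 -muln_gcdl divnMr //; congr (_ + _).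
rewrite -sum_nat_const_nat; apply: eq_big_nat => r /andP [r_gt0 r_lt_p].
suff /eqnP -> : coprime (p ^ a * p) (j * p + r) by rewrite divn1.
rewrite -expnSr coprime_pexpl // prime_coprime // dvdn_addr ?dvdn_mull //.
by rewrite gtnNdvd.
Qed.

Lemma psi_nat_pfactor p a : prime p -> (p + 1) * psi_nat (p ^ a) = p ^ (2 * a + 1) + 1.
Proof.
move=> pr_p; have p_gt1 := prime_gt1 pr_p.
elim: a => [|a IHa]; first by rewrite expn0 psi_nat1 muln1 expn1.
rewrite psi_nat_pfactorS // mulnDr IHa.
have -> : p ^ (2 * a + 1) = p ^ a * p ^ a * p.
  by rewrite -[p in RHS]expn1 -!expnD; congr (_ ^ _); lia.
have -> : p ^ (2 * a.+1 + 1) = p ^ a * p ^ a * p * p * p.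
  by rewrite -[p in RHS]expn1 -!expnD; congr (_ ^ _); lia.
rewrite expnS; set X := p ^ a.
have -> : p = (p - 1) + 1 by lia.
set u := p - 1; rewrite addnK.
ring.
Qed.

Lemma psi_nat_pfactor_lb p a : prime p -> 5 <= p ->
  4 * (p ^ a * p ^ a.+1) < psi_nat (p ^ a.+1).
Proof.
move=> pr_p p_ge5; have := psi_nat_pfactor a.+1 pr_p.
have -> : p ^ (2 * a.+1 + 1) = p ^ a * p ^ a.+1 * (p * p).
  by rewrite -expnD mulnn -expnD; congr (_ ^ _); lia.
set X := p ^ a * p ^ a.+1; set Y := psi_nat _ => eqY.
have X_gt0 : 0 < X by rewrite /X muln_gt0 !expn_gt0 (prime_gt0 pr_p).
suff : (p + 1) * (4 * X) < (p + 1) * Y by rewrite ltn_mul2l => /andP[].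
by rewrite eqY; nia.
Qed.

Lemma gcdn_mul_dvd a b x : gcdn (a * b) x %| gcdn a x * gcdn b x.
Proof.
have gab : gcdn (a * b) x %| a * b by exact: dvdn_gcdl.
have gx : gcdn (a * b) x %| x by exact: dvdn_gcdr.
rewrite muln_gcdl dvdn_gcd !muln_gcdr !dvdn_gcd gab dvdn_mull //.
by rewrite !dvdn_mulr.
Qed.

Lemma coprime_modMr_inj a b x y : coprime a b -> x < b -> y < b ->
  x * a = y * a %[mod b] -> x = y.
Proof.
move=> co_ab.
wlog le_xy : x y / x <= y.
  move=> W x_lt y_lt E; have [le|lt] := leqP x y; first exact: W.
  by symmetry; apply: W => //; exact: ltnW.
move=> x_lt y_lt /eqP; rewrite eq_sym eqn_mod_dvd ?leq_mul2r ?le_xy ?orbT //.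
rewrite -mulnBl Gauss_dvdl; last by rewrite coprime_sym.
move=> dvd; have [|/dvdn_leq/(_ dvd)] := posnP (y - x); lia.
Qed.

Lemma psi_nat_affine a b i : coprime a b -> 0 < b ->
  \sum_(0 <= j < b) b %/ gcdn b (j * a + i) = psi_nat b.
Proof.
move=> co_ab b_gt0.
rewrite (eq_bigr (fun j => b %/ gcdn b ((j * a + i) %% b))); last first.
  by move=> j _; rewrite gcdn_modr.
rewrite /psi_nat !big_mkord.
pose h (j : 'I_b) : 'I_b := Ordinal (ltn_pmod (j * a + i) b_gt0).
suff inj_h : injective h by rewrite [RHS](reindex_inj inj_h).
move=> x y /(congr1 val) /= /eqP; rewrite eqn_modDr => /eqP E.
exact/val_inj/(coprime_modMr_inj co_ab (ltn_ord x) (ltn_ord y) E).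
Qed.

Lemma leq_mul_divn_gcd a b x : 0 < a -> 0 < b ->
  a %/ gcdn a x * (b %/ gcdn b x) <= (a * b) %/ gcdn (a * b) x.
Proof.
move=> a_gt0 b_gt0.
have ga_gt0 : 0 < gcdn a x by rewrite gcdn_gt0 a_gt0.
have gb_gt0 : 0 < gcdn b x by rewrite gcdn_gt0 b_gt0.
have -> : a %/ gcdn a x * (b %/ gcdn b x) = (a * b) %/ (gcdn a x * gcdn b x).
  have {1}-> : a * b = (a %/ gcdn a x * (b %/ gcdn b x)) * (gcdn a x * gcdn b x).
    by rewrite mulnACA !divnK ?dvdn_gcdl.
  by rewrite mulnK // muln_gt0 ga_gt0 gb_gt0.
apply: leq_div2l; first by rewrite gcdn_gt0 muln_gt0 a_gt0 b_gt0.
by apply: dvdn_leq; [rewrite muln_gt0 ga_gt0 gb_gt0 | exact: gcdn_mul_dvd].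
Qed.

Lemma psi_nat_coprime_mul a b : coprime a b -> psi_nat a * psi_nat b <= psi_nat (a * b).
Proof.
move=> co_ab.
have [->|a_gt0] := posnP a; first by rewrite psi_nat0.
have [->|b_gt0] := posnP b; first by rewrite psi_nat0 muln0.
rewrite [psi_nat a]/psi_nat big_distrl /= {2}/psi_nat mulnC sum_nat_blocks.
rewrite [b * a]mulnC exchange_big_nat /=; apply: leq_sum => i _.
rewrite -(psi_nat_affine i co_ab b_gt0) big_distrr /=; apply: leq_sum => j _.
by rewrite -(gcdnMDl j) leq_mul_divn_gcd.
Qed.

Lemma psi_nat_odd_lb n l : odd n -> 2 <= l -> (forall r, prime r -> r %| n -> r <= l) ->
  3 * n ^ 2 <= (l + 1) * psi_nat n.
Proof.
elim/ltn_ind: n l => n IHn l odd_n l_ge2 le_l.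
have n_gt0 : 0 < n by case: n odd_n {IHn le_l}.
have [n_gt1|n_le1] := ltnP 1 n; last first.
  have -> : n = 1 by lia.
  by rewrite psi_nat1; lia.
set p := max_pdiv n; have pr_p : prime p := max_pdiv_prime n_gt1.
have p_dvd : p %| n := max_pdiv_dvd n.
have p_gt2 : 2 < p := odd_prime_gt2 (dvdn_odd p_dvd odd_n) pr_p.
have p_dvd_q : p %| n`_p.
  by rewrite p_part dvdn_exp // logn_gt0 mem_primes pr_p n_gt0.
have def_n : n`_p * n`_p^' = n := partnC p n_gt0.
set q := n`_p in p_dvd_q def_n *; set m := n`_p^' in def_n *.
have m_dvd : m %| n by rewrite -def_n dvdn_mull.
have q_gt1 : 1 < q := leq_trans (prime_gt1 pr_p) (dvdn_leq (part_gt0 _ _) p_dvd_q).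
have m_lt_n : m < n.
  by rewrite -def_n -[m in m < _]mul1n ltn_mul2r part_gt0.
have IHm : 3 * m ^ 2 <= p * psi_nat m.
  have -> : p = p.-1 + 1 by lia.
  apply: IHn => //; [exact: dvdn_odd m_dvd odd_n | lia |] => r pr_r r_dvd.
  have r_le_p : r <= p.
    by apply: max_pdiv_max; rewrite mem_primes pr_r n_gt0 (dvdn_trans r_dvd).
  have r_neq_p : r != p.
    apply: contraTneq r_dvd => ->; rewrite -prime_coprime //.
    exact: coprime_dvdl p_dvd_q (coprime_partC _ _ _).
  lia.
have psi_q : (p + 1) * psi_nat q = q * q * p + 1.
  rewrite /q p_part psi_nat_pfactor //; congr (_ + _); set a := logn p n.
  by rewrite -[p in RHS]expn1 -!expnD; congr (_ ^ _); lia.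
have psi_qm : psi_nat q * psi_nat m <= psi_nat n.
  by rewrite -def_n psi_nat_coprime_mul // coprime_partC.
rewrite -def_n; apply: (@leq_trans (q * q * (p * psi_nat m))).
  by rewrite expnMn mulnCA mulnn leq_mul2l IHm orbT.
apply: (@leq_trans ((p + 1) * psi_nat q * psi_nat m)).
  by rewrite mulnA leq_mul2r psi_q leq_addr orbT.
rewrite -mulnA def_n leq_mul // leq_add2r.
exact: le_l.
Qed.

Lemma psi_nat_max_pdiv_lb n : odd n -> 1 < n -> 2 * n * (n %/ max_pdiv n) <= psi_nat n.
Proof.
move=> odd_n n_gt1; set p := max_pdiv n.
have pr_p : prime p := max_pdiv_prime n_gt1.
have lb : 3 * n ^ 2 <= (p + 1) * psi_nat n.
  apply: psi_nat_odd_lb odd_n (prime_gt1 pr_p) _ => r pr_r r_dvd.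
  by apply: max_pdiv_max; rewrite mem_primes pr_r (ltnW n_gt1).
set k := n %/ p; have def_n : n = k * p by rewrite divnK // max_pdiv_dvd.
suff : 3 * p * (2 * n * k) <= 3 * p * psi_nat n.
  by rewrite leq_pmul2l // muln_gt0 (prime_gt0 pr_p).
have -> : 3 * p * (2 * n * k) = 2 * (3 * n ^ 2) by rewrite -mulnn {3}def_n; ring.
apply: (@leq_trans (2 * ((p + 1) * psi_nat n))); first by rewrite leq_mul2l lb orbT.
by rewrite mulnA leq_mul2r; have := prime_gt1 pr_p; lia.
Qed.

Section PsiGroup.
Local Open Scope group_scope.
Variable gT : finGroupType.
Implicit Types (G H P : {group gT}) (x y z : gT).

Lemma psi_cycle x : psi <[x]> = psi_nat #[x].
Proof.
pose h (i : 'I_#[x]) := x ^+ i.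
have inj_h : injective h.
  move=> i j /eqP; rewrite /h eq_expg_mod_order !modn_small // => /eqP E.
  exact: val_inj.
have -> : <[x]> = [set h i | i : 'I_#[x]].
  apply/eqP; rewrite eq_sym eqEcard card_imset // card_ord leqnn andbT.
  by apply/subsetP => _ /imsetP [i _ ->]; rewrite mem_cycle.
rewrite /psi big_imset /=; last by move=> i j _ _; exact: inj_h.
by rewrite /psi_nat big_mkord; apply: eq_bigr => i _; rewrite orderXgcd.
Qed.

Lemma psi_cyclic G : cyclic G -> psi G = psi_nat #|G|.
Proof. by case/cyclicP => x ->; rewrite psi_cycle. Qed.

Lemma psi_le_max_order G k : {in G, forall x, #[x] <= k}%N ->
  (psi G <= 1 + (#|G| - 1) * k)%N.
Proof.
move=> le_k; rewrite /psi (bigD1 1) //= order1 leq_add2l.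
apply: (@leq_trans (\sum_(x in G | x != 1%g) 1 * k)%N).
  by apply: leq_sum => x /andP [Gx _]; rewrite mul1n le_k.
rewrite -big_distrl /= sum1_card leq_mul2r (cardD1 1 G) group1 add1n subn1 /=.
by apply/orP; right; apply/eq_leq/eq_card => x; rewrite !inE andbC.
Qed.

Lemma sylow_normal_of_large_normaliser p G P : prime p -> p.-Sylow(G) P ->
  (#|G| < p.+1 * #|'N_G(P)|)%N -> P <| G.
Proof.
move=> pr_p sylP lt_G.
have sNG : 'N_G(P) \subset G := subsetIl _ _.
have := card_Syl_mod G pr_p; rewrite (card_Syl sylP) => idx_mod.
have idx_lt : (#|G : 'N_G(P)| < p.+1)%N.
  by move: lt_G; rewrite -(Lagrange sNG) mulnC ltn_mul2r => /andP[].
have idx1 : #|G : 'N_G(P)| = 1%N.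
  move: idx_lt; rewrite (divn_eq #|G : _| p) idx_mod.
  by case: (_ %/ p)%N => //= j; rewrite mulSn; lia.
have defN : 'N_G(P) = G.
  by apply/eqP; rewrite eqEcard sNG /= -{1}(Lagrange sNG) idx1 muln1.
by rewrite /normal (pHall_sub sylP) -defN subsetIr.
Qed.

Lemma sylow_normal_of_large_order p G x : prime p -> x \in G ->
  (#|G| %/ p < #[x])%N -> p.-Sylow(G) <[x.`_p]> /\ <[x.`_p]> <| G.
Proof.
move=> pr_p Gx lt_x.
have [k def_G] : exists k, #|G| = (#[x] * k)%N.
  by exists (#|G| %/ #[x])%N; rewrite mulnC divnK // order_dvdG.
have k_lt_p : (k < p)%N.
  by move: lt_x; rewrite ltn_divLR ?prime_gt0 // def_G ltn_mul2l => /andP[].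
have k_gt0 : (0 < k)%N by move: (cardG_gt0 G); rewrite def_G muln_gt0 => /andP[].
have k_p' : (k`_p = 1)%N by apply: part_p'nat; rewrite p'natE // gtnNdvd.
have cardP : #|<[x.`_p]>| = (#|G|`_p)%N.
  by rewrite -/#[_] order_constt def_G partnM ?order_gt0 // k_p' muln1.
have sylP : p.-Sylow(G) <[x.`_p]> by rewrite pHallE cycle_subG groupX //= cardP eqxx.
split=> //; apply: (sylow_normal_of_large_normaliser pr_p sylP).
have x_norm : <[x]> \subset 'N_G(<[x.`_p]>).
  rewrite subsetI cycle_subG Gx sub_abelian_norm ?cycle_abelian //.
  by rewrite cycle_subG cycle_constt.
apply: (leq_trans _ (leq_mul (leqnSn p) (subset_leq_card x_norm))).
by rewrite mulnC -ltn_divLR ?prime_gt0.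
Qed.

Lemma order_le_mul_orderX x n : (0 < n)%N -> (#[x] <= n * #[x ^+ n])%N.
Proof.
move=> n_gt0; apply: dvdn_leq; first by rewrite muln_gt0 n_gt0 order_gt0.
by rewrite order_dvdn expgM expg_order.
Qed.

Lemma expg_order_coset_mem P x : x \in 'N(P) -> x ^+ #[coset P x] \in P.
Proof.
move=> Nx; apply: coset_idr; first exact: groupX.
by rewrite morphX // expg_order.
Qed.

Lemma expg_order_coset_p'elt p P z : p.-group P -> z \in 'N(P) -> p^'.-elt z ->
  z ^+ #[coset P z] = 1.
Proof.
move=> pP Nz p'z; apply/eqP; rewrite -order_eq1; apply/eqP.
apply: (@pnat_1 p); first exact: mem_p_elt pP (expg_order_coset_mem Nz).
exact: p_eltX.
Qed.

Lemma order_expg_coset_ncent p P x : prime p -> p.-group P -> x \in 'N(P) ->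
  x \notin 'C(P) -> (#[x ^+ #[coset P x]] <= #|P| %/ p)%N.
Proof.
move=> pr_p pP Nx nCx; set w := x ^+ _.
have Pw : w \in P := expg_order_coset_mem Nx.
have := order_dvdG Pw; rewrite (card_pgroup pP) => /(dvdn_pfactor _ _ pr_p) [b le_b def_w].
have b_neq : b != logn p #|P|.
  apply: contra nCx => /eqP def_b; rewrite -sub_cent1.
  have <- : <[w]> = P.
    apply/eqP; rewrite eqEcard cycle_subG Pw /= -/#[w] def_w def_b.
    by rewrite -(card_pgroup pP).
  by rewrite cycle_subG; apply/cent1P/commute_sym/commuteX.
rewrite def_w leq_divRL ?prime_gt0 // -expnSr leq_pexp2l ?(prime_gt1 pr_p) ?(prime_gt0 pr_p) //.
by rewrite ltn_neqAle b_neq le_b.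
Qed.

Lemma coset_fiber P H y : P \subset H -> H \subset 'N(P) -> y \in H ->
  [set x in H | coset P x == coset P y] = P :* y.
Proof.
move=> sPH nPH Hy; apply/setP => x; rewrite !inE.
have Ny := subsetP nPH y Hy.
apply/andP/idP => [[Hx /eqP]|Pyx].
  by move/rcoset_kercosetP; apply; rewrite ?(subsetP nPH).
have Hx : x \in H by case/rcosetP: Pyx => u Pu ->; rewrite groupM // (subsetP sPH).
by split=> //; apply/eqP/rcoset_kercosetP; rewrite ?(subsetP nPH).
Qed.

Lemma sum_over_quotient P H (f : coset_of P -> nat) : P \subset H -> H \subset 'N(P) ->
  (\sum_(x in H) f (coset P x) = #|P| * \sum_(c in H / P) f c)%N.
Proof.
move=> sPH nPH.
rewrite (partition_big_imset (coset P)) /= /quotient morphimEsub // big_distrr /=.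
apply: eq_bigr => _ /imsetP [y Hy ->].
rewrite (eq_bigr (fun _ => f (coset P y))); last by move=> x /andP [_ /eqP ->].
rewrite sum_nat_const -(card_rcoset P y) -(coset_fiber sPH nPH Hy).
by congr (_ * _)%N; apply: eq_card => x; rewrite !inE.
Qed.

Section NormalSylow.
Variables (p : nat) (G P : {group gT}).
Hypotheses (pr_p : prime p) (sylP : p.-Sylow(G) P) (nsPG : P <| G).

Lemma card_quotient_sylow : #|G / P| = (#|G|`_p^')%N.
Proof.
rewrite card_quotient ?normal_norm // -divgS ?(pHall_sub sylP) // (card_Hall sylP).
by rewrite -{1}(partnC p (cardG_gt0 G)) mulKn.
Qed.

Lemma coset_constt_p' y : y \in G -> coset P y.`_p^' = coset P y.
Proof.
move=> Gy; have Py : y.`_p \in P by rewrite (mem_normal_Hall sylP nsPG) ?p_elt_constt ?groupX.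
by rewrite -{2}(consttC p y) coset_kerl.
Qed.

Hypothesis abP : abelian P.

Lemma sum_orders_cent_fiber y : y \in 'C_G(P) ->
  (\sum_(x in 'C_G(P) | coset P x == coset P y) #[coset P x] * #[x ^+ #[coset P x]]
     <= #[coset P y] * psi P)%N.
Proof.
move=> CGy; have pP := pHall_pgroup sylP.
have sPC : P \subset 'C_G(P) by rewrite subsetI (pHall_sub sylP).
have nPC : 'C_G(P) \subset 'N(P) := subset_trans (subsetIl _ _) (normal_norm nsPG).
set z := y.`_p^'; have CGz : z \in 'C_G(P) by rewrite groupX.
have def_yP : coset P z = coset P y.
  by rewrite coset_constt_p' // (subsetP (subsetIl _ _) y CGy).
rewrite (eq_bigr (fun x => #[coset P y] * #[x ^+ #[coset P y]])%N); last first.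
  by move=> x /andP [_ /eqP ->].
rewrite -big_distrr leq_mul2l; apply/orP; right.
rewrite (eq_bigl (mem (P :* z))); last first.
  by move=> x; rewrite -(coset_fiber sPC nPC CGz) def_yP !inE.
rewrite -rcosetE /rcoset big_imset /=; last by move=> u v _ _; exact: mulIg.
apply: leq_sum => u Pu.
have cuz : commute u z.
  by apply: commute_sym; apply: (centP (subsetP (subsetIr _ _) z CGz)).
have Nz : z \in 'N(P) := subsetP nPC z CGz.
rewrite expgMn // -def_yP (expg_order_coset_p'elt pP Nz) ?p_elt_constt // mulg1.
by apply: dvdn_leq; [exact: order_gt0 | exact: orderXdvd].
Qed.

Lemma psi_normal_sylow_ub :
  (psi G + #|P| %/ p * #|P| * psi ('C_G(P) / P)
     <= psi P * psi ('C_G(P) / P) + #|P| %/ p * #|P| * psi (G / P))%N.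
Proof.
have pP := pHall_pgroup sylP; have nPG := normal_norm nsPG.
have sPC : P \subset 'C_G(P) by rewrite subsetI (pHall_sub sylP).
have nPC : 'C_G(P) \subset 'N(P) := subset_trans (subsetIl _ _) nPG.
pose F x := (#[coset P x] * #[x ^+ #[coset P x]])%N.
have psiG_le : (psi G <= \sum_(x in 'C_G(P)) F x + \sum_(x in G :\: 'C(P)) F x)%N.
  rewrite -big_setID; apply: leq_sum => x Gx.
  by rewrite order_le_mul_orderX ?order_gt0.
have cent_le : (\sum_(x in 'C_G(P)) F x <= psi P * psi ('C_G(P) / P))%N.
  rewrite (partition_big_imset (coset P)) /= /quotient morphimEsub //.
  rewrite /psi mulnC big_distrl /=; apply: leq_sum => _ /imsetP [y CGy ->].
  exact: sum_orders_cent_fiber.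
set S := (\sum_(x in G :\: 'C(P)) #[coset P x])%N.
have ncent_le : (\sum_(x in G :\: 'C(P)) F x <= #|P| %/ p * S)%N.
  rewrite big_distrr /=; apply: leq_sum => x /setDP [Gx nCx].
  by rewrite /F mulnC leq_mul2r order_expg_coset_ncent ?orbT // (subsetP nPG).
have sum_ncent : (S + #|P| * psi ('C_G(P) / P) = #|P| * psi (G / P))%N.
  rewrite /psi -!(sum_over_quotient (fun c => #[c])) ?(pHall_sub sylP) //.
  by rewrite [in RHS](big_setID 'C(P)) addnC.
have := congr1 (muln (#|P| %/ p)) sum_ncent; rewrite mulnDr !mulnA.
move: (_ * S)%N (_ * psi _)%N (psi P * _)%N ncent_le cent_le psiG_le => a b c; lia.
Qed.

Lemma quotient_central_sylow_noncyclic : cyclic P -> G \subset 'C(P) ->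
  ~~ cyclic G -> ~~ cyclic (G / P).
Proof.
move=> cycP cPG; apply: contra => /cyclicP [c def_c].
have : c \in G / P by rewrite def_c cycle_id.
case/morphimP=> y Ny Gy def_cy; rewrite {c}def_cy in def_c.
have pP := pHall_pgroup sylP; have sPG := pHall_sub sylP.
set z := y.`_p^'; have Gz : z \in G by rewrite groupX.
have def_zP : coset P z = coset P y := coset_constt_p' Gy.
have Nz : z \in 'N(P) := subsetP (normal_norm nsPG) z Gz.
have oz : #[z] = #|G / P|.
  suff -> : #[z] = #[coset P y] by rewrite def_c.
  apply/eqP; rewrite -def_zP eqn_dvd morph_order // andbT.
  by rewrite order_dvdn (expg_order_coset_p'elt pP Nz) ?p_elt_constt.
have coPz : coprime #|P| #|<[z]>|.
  by rewrite -/#[z] oz card_quotient_sylow (card_Hall sylP) coprime_partC.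
have <- : P * <[z]> = G.
  apply/eqP; rewrite eqEcard mulG_subG sPG cycle_subG Gz /=.
  by rewrite coprime_cardMg // -/#[z] oz card_quotient_sylow (card_Hall sylP) partnC.
by rewrite cyclicM ?cycle_cyclic // cycle_subG (subsetP cPG).
Qed.

End NormalSylow.

End PsiGroup.

Lemma psiC_psi_nat n : 0 < n -> psiC n = psi_nat n.
Proof.
move=> n_gt0; have cycZ : cyclic (Zp n).
  by rewrite /Zp; case: ifP => _; [rewrite Zp_cycle cycle_cyclic | exact: cyclic1].
by rewrite /psiC psi_cyclic // card_Zp.
Qed.

Lemma psi_nat_gt0 n : 0 < n -> 0 < psi_nat n.
Proof. by move=> n_gt0; have := leq_psi_nat_mull n 1; rewrite psi_nat1 muln1; lia. Qed.

Lemma psi_nat_partC_mul p n : 0 < n -> psi_nat n`_p * psi_nat n`_p^' <= psi_nat n.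
Proof. by move=> n_gt0; rewrite -{3}(partnC p n_gt0) psi_nat_coprime_mul ?coprime_partC. Qed.

(* The closing estimate of the non-central case, with s = psi G, u = psi P,
   v = |P|^2/p, a and b the psi of C_G(P)/P and G/P, w = psi (C_|G/P|). *)
Lemma double_lt_of_bounds s u v a b w N :
  s + v * a <= u * a + v * b -> 3 * a <= w -> b <= w -> 0 < w -> 4 * v < u ->
  u * w <= N -> 2 * s < N.
Proof.
move=> ub le_a le_b w_gt0 lt_v le_N.
have le_vb : v * b <= v * w by rewrite leq_mul2l le_b orbT.
have le_ua : (u - v) * (3 * a) <= (u - v) * w by rewrite leq_mul2l le_a orbT.
have lt_vw : 4 * (v * w) < u * w by rewrite mulnA ltn_mul2r lt_v w_gt0.
have le_va : v * a <= u * a by rewrite leq_mul2r; apply/orP; right; lia.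
rewrite !mulnBl !mulnA !(mulnC _ 3) -!mulnA in le_ua.
move: (u * a) (v * a) (v * b) (v * w) (u * w) ub le_vb le_ua lt_vw le_va le_N; lia.
Qed.

Lemma noncyclic_card_gt1 (gT : finGroupType) (G : {group gT}) : ~~ cyclic G -> 1 < #|G|.
Proof. by apply: contraR; rewrite -leqNgt => le1; rewrite cyclic_small // (leq_trans le1). Qed.

Lemma psi_small_orders_lt (gT : finGroupType) (G : {group gT}) : odd #|G| -> ~~ cyclic G ->
  {in G, forall x, #[x] <= #|G| %/ max_pdiv #|G|}%g -> 2 * psi G < psi_nat #|G|.
Proof.
move=> oddG ncycG le_ord; have n_gt1 := noncyclic_card_gt1 ncycG.
have lb := psi_nat_max_pdiv_lb oddG n_gt1; have ub := psi_le_max_order le_ord.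
have pr_p := max_pdiv_prime n_gt1; have def_n := divnK (max_pdiv_dvd #|G|).
move: (max_pdiv _) (_ %/ _) pr_p def_n lb ub => p k pr_p def_n lb ub.
have k_gt1 : 1 < k.
  rewrite ltnNge; apply: contra ncycG => k_le1; apply: prime_cyclic.
  have k_gt0 : 0 < k by move: (ltnW n_gt1); rewrite -def_n muln_gt0 => /andP[].
  have k_eq1 : k = 1 by apply/eqP; rewrite eqn_leq k_le1.
  by rewrite -def_n k_eq1 mul1n.
move: (psi G) (psi_nat #|G|) #|G| n_gt1 lb ub => s N n n_gt1 lb ub.
have k_le : k <= n * k by rewrite leq_pmull // ltnW.
have : (n - 1) * k + k = n * k by rewrite mulnBl mul1n subnK.
by rewrite -mulnA in lb; move: (n * k) ((n - 1) * k) lb ub k_le => *; lia.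
Qed.

Lemma prime_gt4_of_odd_lt p r : prime p -> odd r -> prime r -> r < p -> 4 < p.
Proof.
move=> pr_p odd_r pr_r lt_rp; have := odd_prime_gt2 odd_r pr_r.
suff : p != 4 by lia.
by apply: contraTneq pr_p => ->.
Qed.

Lemma divn_ge3_odd_proper k m : odd m -> k %| m -> k != m -> 3 <= m %/ k.
Proof.
move=> odd_m dvd_km neq_km; have def_m := divnK dvd_km.
have odd_r : odd (m %/ k) by move: odd_m; rewrite -{1}def_m oddM => /andP[].
move: def_m odd_r; case: (m %/ k) => [|[|[|r]]] //=.
by rewrite mul1n => km; rewrite km eqxx in neq_km.
Qed.

Section CyclicNormalSylow.
Local Open Scope group_scope.
Variables (gT : finGroupType) (p : nat) (G P : {group gT}).
Hypotheses (pr_p : prime p) (sylP : p.-Sylow(G) P) (nsPG : P <| G) (cycP : cyclic P).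

Let abP : abelian P := cyclic_abelian cycP.

Lemma psi_nat_sylow_quotient_mul : (psi_nat #|P| * psi_nat #|G / P| <= psi_nat #|G|)%N.
Proof. by rewrite (card_Hall sylP) (card_quotient_sylow sylP nsPG) psi_nat_partC_mul. Qed.

Lemma psi_central_sylow_lt : G \subset 'C(P) ->
  (2 * psi (G / P) < psi_nat #|G / P| -> 2 * psi G < psi_nat #|G|)%N.
Proof.
move=> cPG lt_quo.
have := psi_normal_sylow_ub pr_p sylP nsPG abP.
rewrite (setIidPl cPG) leq_add2r (psi_cyclic cycP) => ub.
apply: leq_trans psi_nat_sylow_quotient_mul.
apply: leq_ltn_trans (_ : psi_nat #|P| * (2 * psi (G / P)) < _)%N.
  by rewrite mulnCA leq_mul2l ub orbT.
by rewrite ltn_mul2l lt_quo psi_nat_gt0.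
Qed.

Lemma psi_noncentral_sylow_lt : odd #|G| ->
  (forall r, prime r -> r %| #|G| -> r <= p)%N -> ~~ (G \subset 'C(P)) ->
  (psi ('C_G(P) / P) <= psi_nat #|'C_G(P) / P|)%N ->
  (psi (G / P) <= psi_nat #|G / P|)%N -> (2 * psi G < psi_nat #|G|)%N.
Proof.
move=> oddG le_p ncPG ubC ubG.
have sPG := pHall_sub sylP; have sCG : 'C_G(P) \subset G := subsetIl _ _.
have sPC : P \subset 'C_G(P) by rewrite subsetI sPG; exact: abP.
have nPC : 'C_G(P) \subset 'N(P) := subset_trans sCG (normal_norm nsPG).
have def_m : #|G / P| = (#|G|`_p^')%N := card_quotient_sylow sylP nsPG.
have dvd_km : (#|'C_G(P) / P| %| #|G / P|)%N := cardSg (quotientS P sCG).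
have neq_km : #|'C_G(P) / P| != #|G / P|.
  apply: contra ncPG => /eqP eq_km; rewrite -(_ : 'C_G(P) = G) ?subsetIr //.
  apply/eqP; rewrite eqEcard sCG -(Lagrange sPG) -(Lagrange sPC).
  by rewrite /= -!card_quotient ?(normal_norm nsPG) // eq_km.
have odd_m : odd #|G / P| by rewrite def_m (dvdn_odd (dvdn_part _ _)).
have r_ge3 := divn_ge3_odd_proper odd_m dvd_km neq_km.
have lbC : (3 * psi ('C_G(P) / P) <= psi_nat #|G / P|)%N.
  rewrite -(divnK dvd_km); apply: leq_trans (leq_psi_nat_mull _ _).
  exact: leq_mul.
have p_gt4 : (4 < p)%N.
  have m_gt1 : (1 < #|G / P|)%N.
    by rewrite -(divnK dvd_km) (leq_trans _ (leq_pmulr _ (cardG_gt0 _))) // ltnW.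
  have pr_r := pdiv_prime m_gt1; have dvd_r := pdiv_dvd #|G / P|.
  have dvd_rG : (pdiv #|G / P| %| #|G|)%N by rewrite (dvdn_trans dvd_r) // def_m dvdn_part.
  apply: (prime_gt4_of_odd_lt pr_p (dvdn_odd dvd_r odd_m) pr_r).
  rewrite ltn_neqAle le_p // andbT; apply: contraTneq dvd_r => ->.
  by rewrite -p'natE // def_m part_pnat.
have lg_gt0 : (0 < logn p #|G|)%N.
  rewrite lt0n; apply: contra ncPG => /eqP lg0.
  have -> : P :=: 1 by apply: card_le1_trivg; rewrite (card_Hall sylP) p_part lg0.
  exact: cents1.
have lbP : (4 * (#|P| %/ p * #|P|) < psi_nat #|P|)%N.
  rewrite (card_Hall sylP) p_part -(prednK lg_gt0) {1}expnS mulKn ?prime_gt0 //.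
  exact: psi_nat_pfactor_lb.
have := psi_normal_sylow_ub pr_p sylP nsPG abP; rewrite (psi_cyclic cycP) => ub.
exact: double_lt_of_bounds ub lbC ubG (psi_nat_gt0 (cardG_gt0 _)) lbP psi_nat_sylow_quotient_mul.
Qed.

End CyclicNormalSylow.

Lemma psi_odd_ub n : forall (gT : finGroupType) (G : {group gT}), #|G| = n -> odd n ->
  psi G <= psi_nat n /\ (~~ cyclic G -> 2 * psi G < psi_nat n).
Proof.
elim/ltn_ind: n => n IHn gT G def_n; subst n => oddG.
have [cycG|ncycG] := boolP (cyclic G); first by rewrite psi_cyclic.
suff lt : 2 * psi G < psi_nat #|G|.
  by split=> //; apply: ltnW (leq_ltn_trans (leq_pmull _ _) lt).
have n_gt1 := noncyclic_card_gt1 ncycG; set p := max_pdiv #|G|.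
have pr_p : prime p := max_pdiv_prime n_gt1.
have [/exists_inP [x Gx lt_x] | small] := boolP [exists x in G, #|G| %/ p < #[x]%g].
  have [sylP nsPG] := sylow_normal_of_large_order pr_p Gx lt_x.
  set P := <[x.`_p]>%G in sylP nsPG; have cycP : cyclic P := cycle_cyclic _.
  have ltQ : #|(G / P)%g| < #|G|.
    apply: ltn_quotient (pHall_sub sylP).
    by rewrite trivg_card1 (card_Hall sylP) p_part_eq1 negbK pi_max_pdiv.
  have oddQ : odd #|(G / P)%g|.
    by rewrite (card_quotient_sylow sylP nsPG) (dvdn_odd (dvdn_part _ _)).
  have [cPG|ncPG] := boolP (G \subset 'C(P)%g).
    apply: (psi_central_sylow_lt pr_p sylP nsPG cycP cPG).
    have [_ IHQ] := IHn _ ltQ _ _ erefl oddQ.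
    exact/IHQ/(quotient_central_sylow_noncyclic sylP nsPG cycP cPG ncycG).
  have sCG : ('C_G(P) \subset G)%g := subsetIl _ _.
  have dvdC : #|('C_G(P) / P)%g| %| #|(G / P)%g| := cardSg (quotientS P sCG).
  apply: (psi_noncentral_sylow_lt pr_p sylP nsPG cycP oddG _ ncPG).
  - by move=> r pr_r dvd_r; apply: max_pdiv_max; rewrite mem_primes pr_r cardG_gt0.
  - have ltC : #|('C_G(P) / P)%g| < #|G| by apply: leq_ltn_trans ltQ; exact: dvdn_leq.
    exact: (IHn _ ltC _ _ erefl (dvdn_odd dvdC oddQ)).1.
  - exact: (IHn _ ltQ _ _ erefl oddQ).1.
apply: psi_small_orders_lt => // y Gy; rewrite leqNgt.
by apply: contra small => lt_y; apply/exists_inP; exists y.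
Qed.

Theorem corollary4 (gT : finGroupType) (G : {group gT}) :
  odd #|G| -> ~~ cyclic G -> (2 * psi G < psiC #|G|)%N.
Proof.
move=> oddG ncycG; rewrite psiC_psi_nat ?cardG_gt0 //.
exact: (psi_odd_ub erefl oddG).2.
Qed.
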